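(* Let $n \geq 2$ and $d \geq 2$ be integers, let $k$ be a positive integer, and let $\mathcal{X} \subseteq \mathbb{R}^k$. Let $\mathcal{S}_n^d$ denote the collection of all sets $\{v_1, \ldots, v_n\}$ consisting of $n$ vectors $v_i \in \mathbb{R}^d$. Suppose $g\colon \mathcal{S}_n^d \to \mathcal{X}$ is continuous, where $\mathcal{S}_n^d$ is equipped with the symmetric Chamfer distance and $\mathcal{X}$ with the Euclidean distance. Let $h\colon \mathcal{X} \to \mathbb{R}^{n \times d}$ be a function such that for every $V = \{v_1, \ldots, v_n\} \in \mathcal{S}_n^d$ there exists a permutation $\sigma$ of $\{1, \ldots, n\}$ with $$h(g(\{v_1, \ldots, v_n\})) = [v_{\sigma(1)}, v_{\sigma(2)}, \ldots, v_{\sigma(n)}],$$ i.e. the matrix whose $i$-th row is $v_{\sigma(i)}$. Then $h$ is discontinuous (with respect to the Euclidean distances on $\mathcal{X}$ and on $\mathbb{R}^{n\times d}$).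
   Context: The symmetric Chamfer distance between two sets $A, B \in \mathcal{S}_n^d$ is $d_{\mathrm{Ch}}(A,B) = \sum_{a \in A} \min_{b \in B} \|a - b\|_2^2 + \sum_{b \in B} \min_{a \in A} \|a - b\|_2^2$. Elements of $\mathcal{S}_n^d$ are unordered, while elements of $\mathbb{R}^{n \times d}$ are ordered lists of $n$ vectors in $\mathbb{R}^d$. *)

From Stdlib Require Import Reals.
From HB Require Import structures.
From mathcomp Require Import all_boot all_order all_algebra all_fingroup.
From mathcomp Require Import finmap.
From mathcomp Require Import Rstruct.
Set Implicit Arguments. Unset Strict Implicit. Unset Printing Implicit Defensive.
Import Order.TTheory GRing.Theory Num.Theory.
Local Open Scope ring_scope.
Local Open Scope fset_scope.

(* Squared Euclidean distance between two m x p real matrices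
   (vectors of R^d are row vectors 'rV[R]_d = 'M[R]_(1,d)). *)
Definition sqdist (m p : nat) (A B : 'M[R]_(m, p)) : R :=
  \sum_(i < m) \sum_(j < p) (A i j - B i j) ^+ 2.

Definition edist (m p : nat) (A B : 'M[R]_(m, p)) : R :=
  Num.sqrt (sqdist A B).

(* min_{b in B} ||a - b||^2 for a nonempty finite set B (the neutral element
   of the iterated min is an element of B, so it is the true minimum). *)
Definition mindist (d : nat) (a : 'rV[R]_d) (B : {fset 'rV[R]_d}) : R :=
  \big[Order.min/sqdist a (head 0 (enum_fset B))]_(b <- enum_fset B) sqdist a b.

Definition chamfer (d : nat) (A B : {fset 'rV[R]_d}) : R :=
  \sum_(a <- enum_fset A) mindist a B + \sum_(b <- enum_fset B) mindist b A.

Definition Snd (n d : nat) := {A : {fset 'rV[R]_d} | #|` A| == n}.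

Definition chamfer_continuous (n d k : nat) (g : Snd n d -> 'rV[R]_k) : Prop :=
  forall (V : Snd n d) (eps : R), 0 < eps -> exists2 delta : R, 0 < delta &
    forall W : Snd n d, chamfer (val V) (val W) < delta ->
      edist (g V) (g W) < eps.

Definition continuous_on (k n d : nat) (X : 'rV[R]_k -> Prop)
  (h : 'rV[R]_k -> 'M[R]_(n, d)) : Prop :=
  forall x, X x -> forall eps : R, 0 < eps -> exists2 delta : R, 0 < delta &
    forall y, X y -> edist x y < delta -> edist (h x) (h y) < eps.

From Stdlib Require Import Reals.
From HB Require Import structures.
From mathcomp Require Import all_boot all_order all_algebra all_fingroup.
From mathcomp Require Import finmap.
From mathcomp Require Import Rstruct.
From mathcomp Require Import lra.
Import Order.TTheory GRing.Theory Num.Theory.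
Local Open Scope fset_scope.
Local Open Scope ring_scope.
Set Implicit Arguments. Unset Strict Implicit.

(* Take the loop of sets V(t) = {u(t), -u(t), (3,0), ..., (n+1,0)} in the
   plane of the first two coordinates, with u(t) = (cos t, sin t) and
   0 <= t <= PI. It is continuous for the Chamfer distance and V(PI) = V(0),
   the two antipodal points having swapped places. If h were continuous, the
   row of h(g(V(t))) equal to u(0) at t = 0 would be a continuous selection
   of a point of V(t) which is -u(PI) at t = PI. Its squared distance to u(t)
   would then go continuously from 0 to 4, yet the squared distance from u(t)
   to a point of V(t) is never 2. *)

Lemma sqdist_ge0 m p (A B : 'M[R]_(m, p)) : 0 <= sqdist A B.
Proof. by apply: sumr_ge0 => i _; apply: sumr_ge0 => j _; apply: sqr_ge0. Qed.

Lemma sqdistxx m p (A : 'M[R]_(m, p)) : sqdist A A = 0.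
Proof. by apply: big1 => i _; apply: big1 => j _; rewrite subrr expr0n. Qed.

Lemma sqdistC m p (A B : 'M[R]_(m, p)) : sqdist A B = sqdist B A.
Proof.
by apply: eq_bigr => i _; apply: eq_bigr => j _; rewrite -sqrrN opprB.
Qed.

Lemma sqdist_row_mx m p1 p2 (A1 B1 : 'M[R]_(m, p1)) (A2 B2 : 'M[R]_(m, p2)) :
  sqdist (row_mx A1 A2) (row_mx B1 B2) = sqdist A1 B1 + sqdist A2 B2.
Proof.
rewrite /sqdist -big_split; apply: eq_bigr => i _.
by rewrite big_split_ord; congr (_ + _); apply: eq_bigr => j _;
  rewrite ?row_mxEl ?row_mxEr.
Qed.

Lemma entry_le_edist m p (A B : 'M[R]_(m, p)) i j :
  `|A i j - B i j| <= edist A B.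
Proof.
rewrite /edist -sqrtr_sqr ler_sqrt ?sqdist_ge0 //.
rewrite /sqdist (bigD1 i) //= (bigD1 j) //= -addrA lerDl.
by rewrite addr_ge0 ?sumr_ge0 // => *; rewrite ?sumr_ge0 // => *; apply: sqr_ge0.
Qed.

Lemma mindist_le d (a b : 'rV[R]_d) (B : {fset 'rV[R]_d}) :
  b \in B -> mindist a B <= sqdist a b.
Proof. by move=> bB; apply: ge_bigmin_seq. Qed.

Lemma chamfer_le_close d (A B : {fset 'rV[R]_d}) e :
  (forall a, a \in A -> exists2 b, b \in B & sqdist a b <= e) ->
  (forall b, b \in B -> exists2 a, a \in A & sqdist b a <= e) ->
  chamfer A B <= e *+ (#|` A| + #|` B|).
Proof.
have sum_mindist_le (A' B' : {fset 'rV[R]_d}) :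
    (forall a, a \in A' -> exists2 b, b \in B' & sqdist a b <= e) ->
    \sum_(a <- enum_fset A') mindist a B' <= e *+ #|` A'|.
  move=> close; rewrite -[#|` A'|]sum1_size -sumrMnr.
  rewrite big_seq [leRHS]big_seq; apply: ler_sum => a aA'.
  by have [b bB ab] := close a aA'; apply: le_trans (mindist_le a bB) ab.
by move=> AB BA; rewrite mulrnDr lerD // sum_mindist_le.
Qed.

Lemma continuity_ptP (f : R -> R) t0 :
  continuity_pt f t0 <-> forall eps : R, 0 < eps -> exists2 delta : R, 0 < delta &
    forall t, `|t - t0| < delta -> `|f t - f t0| < eps.
Proof.
split=> [fc eps eps_gt0 | near_f eps /RltP /near_f [delta delta_gt0 near_f']].
  have /RltP/fc [delta [/RltP delta_gt0 near_f]] := eps_gt0.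
  exists delta => // t tt0; have [-> | t0t] := eqVneq t0 t.
    by rewrite subrr normr0.
  rewrite -RdistE; apply/RltP/near_f.
  by split; [split=> //; apply/eqP | rewrite /= RdistE; apply/RltP].
exists delta; split=> [|t [_ tt0]]; first exact/RltP.
by rewrite /= RdistE; apply/RltP/near_f'; apply/RltP; rewrite -RdistE.
Qed.

Lemma continuity_sqdist m p (A B : R -> 'M[R]_(m, p)) :
  (forall i j, continuity (fun t => A t i j)) ->
  (forall i j, continuity (fun t => B t i j)) ->
  continuity (fun t => sqdist (A t) (B t)).
Proof.
move=> Ac Bc; apply: continuity_sum => i _; apply: continuity_sum => j _.
exact/continuity_exp/continuity_minus.
Qed.

Definition chamfer_continuous_path n d (P : R -> Snd n d) : Prop :=
  forall (t0 eps : R), 0 < eps -> exists2 delta : R, 0 < delta &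
    forall t, `|t - t0| < delta -> chamfer (val (P t0)) (val (P t)) < eps.

Lemma continuity_comp_entry n d k (X : 'rV[R]_k -> Prop) (g : Snd n d -> 'rV[R]_k)
    (h : 'rV[R]_k -> 'M[R]_(n, d)) (P : R -> Snd n d) :
  (forall V, X (g V)) -> chamfer_continuous g -> continuous_on X h ->
  chamfer_continuous_path P -> forall i j, continuity (fun t => h (g (P t)) i j).
Proof.
move=> gX gc hc Pc i j t0; apply/continuity_ptP => eps eps_gt0.
have [dh dh_gt0 near_h] := hc _ (gX (P t0)) eps eps_gt0.
have [dg dg_gt0 near_g] := gc (P t0) dh dh_gt0.
have [delta delta_gt0 near_P] := Pc t0 dg dg_gt0.
exists delta => // t tt0; rewrite distrC.
exact: le_lt_trans (entry_le_edist _ _ i j) (near_h _ (gX _) (near_g _ (near_P t tt0))).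
Qed.

Definition plane (x y : R) : 'rV[R]_2 := \row_(j < 2) (if j == 0 then x else y).
(* Otherwise the arguments are read in [R_scope], where [- x] is [Ropp x],
   which [lra] and [nra] do not recognise. *)
Arguments plane (x y)%_ring_scope.

Lemma sqdist_plane x y x' y' :
  sqdist (plane x y) (plane x' y') = (x - x') ^+ 2 + (y - y') ^+ 2.
Proof.
rewrite /sqdist big_ord1 !big_ord_recl big_ord0 addr0 !mxE.
by have -> : lift ord0 ord0 = 1 :> 'I_2 by apply: val_inj.
Qed.

Lemma plane_inj x y x' y' : plane x y = plane x' y' -> x = x' /\ y = y'.
Proof.
move=> /rowP e; have := e 0; have := e 1; rewrite !mxE /=.
by move=> -> ->.
Qed.

Definition loop2 (t : R) (i : nat) : 'rV[R]_2 :=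
  match i with
  | 0 => plane (cos t) (sin t)
  | 1 => plane (- cos t) (- sin t)
  | i.+2 => plane i.+3%:R 0
  end.

Lemma cos_sin_bounds t : [/\ cos t ^+ 2 + sin t ^+ 2 = 1, -1 <= cos t & cos t <= 1].
Proof.
have [/RleP ? /RleP ?] := COS_bound t.
by split=> //; have := sin2_cos2 t; rewrite /Rsqr addrC !expr2.
Qed.

Lemma loop2_inj t : injective (loop2 t).
Proof.
have [cs2 cge cle] := cos_sin_bounds t.
have far j : 3 <= j.+3%:R :> R by rewrite ler_nat.
move=> i k; case: i k => [|[|i]] [|[|k]] //= /plane_inj [e0 e1].
  all: try by move/eqP: e0; rewrite eqr_nat => /eqP [->].
all: exfalso; try move: (far i) => ?; try move: (far k) => ?; nra.
Qed.

Lemma sqdist_loop2_le t0 t i :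
  sqdist (loop2 t0 i) (loop2 t i) <= sqdist (loop2 t0 0) (loop2 t 0).
Proof.
case: i => [|[|i]] //=; rewrite !sqdist_plane; first by rewrite -!opprD !sqrrN.
by rewrite !subrr expr0n addr0 addr_ge0 ?sqr_ge0.
Qed.

Lemma sqdist_loop2_neq2 t k : sqdist (loop2 t k) (loop2 t 0) != 2.
Proof.
have [cs2 cge cle] := cos_sin_bounds t.
apply/eqP; case: k => [|[|k]] /=; rewrite sqdist_plane => e; try nra.
have : 3 <= k.+3%:R :> R by rewrite ler_nat.
nra.
Qed.

Definition swap01 (i : nat) : nat :=
  match i with 0 => 1 | 1 => 0 | i.+2 => i.+2 end.

Lemma loop2_PI i : loop2 PI i = loop2 0 (swap01 i).
Proof. by case: i => [|[|i]] //=; rewrite cos_PI sin_PI cos_0 sin_0 ?opprK ?oppr0. Qed.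

Lemma continuity_plane (x y : R -> R) j :
  continuity x -> continuity y -> continuity (fun t => plane (x t) (y t) 0 j).
Proof.
move=> xc yc; apply: (@continuity_eq (fun t => if j == 0 then x t else y t)).
  by move=> t; rewrite mxE.
by case: (j == 0).
Qed.

Definition loop_pt d (t : R) (i : nat) : 'rV[R]_(2 + d) := row_mx (loop2 t i) 0.

Lemma sqdist_loop_pt d t t' i k :
  sqdist (loop_pt d t i) (loop_pt d t' k) = sqdist (loop2 t i) (loop2 t' k).
Proof. by rewrite sqdist_row_mx sqdistxx addr0. Qed.

Lemma continuity_loop_pt0 d i j : continuity (fun t => loop_pt d t 0 i j).
Proof.
rewrite (ord1 i) -[j]splitK; case: (split j) => k /=.
  apply: (@continuity_eq (fun t => loop2 t 0 0 k)); first by move=> t; rewrite row_mxEl.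
  exact: continuity_plane continuity_cos continuity_sin.
apply: (@continuity_eq (fun _ => 0)); first by move=> t; rewrite row_mxEr mxE.
exact: continuity_const.
Qed.

Lemma loop_pt_inj d t : injective (loop_pt d t).
Proof. by move=> i k /eq_row_mx [/loop2_inj]. Qed.

Lemma card_loop_pts n d t : #|` [fset loop_pt d t i | i : 'I_n in 'I_n]| == n.
Proof.
by rewrite card_imfset ?size_enum_ord // => i k /loop_pt_inj /val_inj.
Qed.

Definition loop_set n d (t : R) : Snd n (2 + d) :=
  exist _ [fset loop_pt d t i | i : 'I_n in 'I_n] (card_loop_pts n d t).

Lemma loop_set_PI n d : loop_set n.+2 d PI = loop_set n.+2 d 0.
Proof.
have swap01_lt i : (i < n.+2 -> swap01 i < n.+2)%N by case: i => [|[|i]].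
have loop_pt_PI i : loop_pt d PI i = loop_pt d 0 (swap01 i) by rewrite /loop_pt loop2_PI.
have loop_pt_0 i : loop_pt d 0 i = loop_pt d PI (swap01 i).
  by rewrite loop_pt_PI; case: i => [|[|i]].
apply: val_inj; apply/fsetP => a; apply/imfsetP/imfsetP => -[i _ ->] /=.
  by exists (Ordinal (swap01_lt i (ltn_ord i))); rewrite ?loop_pt_PI.
by exists (Ordinal (swap01_lt i (ltn_ord i))); rewrite ?loop_pt_0.
Qed.

Lemma loop_set_chamfer_continuous n d : chamfer_continuous_path (loop_set n d).
Proof.
move=> t0 eps eps_gt0.
pose E t := sqdist (loop_pt d t0 0) (loop_pt d t 0).
have Ec : continuity E.
  apply: continuity_sqdist => i j; last exact: continuity_loop_pt0.
  exact: continuity_const.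
pose N := (n + n)%N.
have epsN_gt0 : 0 < eps / N.+1%:R by rewrite divr_gt0.
have [delta delta_gt0 near_E] := (continuity_ptP E t0).1 (Ec t0) _ epsN_gt0.
exists delta => // t tt0.
have Et_lt : E t < eps / N.+1%:R.
  by move: (near_E t tt0); rewrite /E sqdistxx subr0; apply: le_lt_trans; apply: ler_norm.
have close i : sqdist (loop_pt d t0 i) (loop_pt d t i) <= E t.
  by rewrite /E !sqdist_loop_pt sqdist_loop2_le.
apply: (le_lt_trans (chamfer_le_close (e := E t) _ _)).
- by move=> _ /imfsetP [i _ ->]; exists (loop_pt d t i); [apply/imfsetP; exists i|].
- by move=> _ /imfsetP [i _ ->]; exists (loop_pt d t0 i); [apply/imfsetP; exists i|rewrite sqdistC].
rewrite !(eqP (card_loop_pts _ _ _)) -/N -mulr_natr.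
rewrite ltr_pdivlMr ?ltr0Sn // in Et_lt; apply: le_lt_trans Et_lt.
by rewrite ler_wpM2l ?sqdist_ge0 // ler_nat.
Qed.

Lemma no_continuous_loop_selection d (m : R -> 'rV[R]_(2 + d)) :
  (forall j, continuity (fun t => m t 0 j)) ->
  m 0 = loop_pt d 0 0 -> m PI = loop_pt d PI 1 ->
  ~ (forall t, exists k, m t = loop_pt d t k).
Proof.
move=> mc m0 mPI m_sel.
pose phi t := sqdist (m t) (loop_pt d t 0) - 2.
have phic : continuity phi.
  apply: continuity_minus; last exact: continuity_const.
  apply: continuity_sqdist => [i j|]; last exact: continuity_loop_pt0.
  by rewrite (ord1 i).
have phi0 : phi 0 = -2 by rewrite /phi m0 sqdistxx sub0r.
have phiPI : phi PI = 2.
  rewrite /phi mPI sqdist_loop_pt sqdist_plane (cos_PI : cos PI = -1) sin_PI R0E.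
  lra.
have phi_sign : Rle (phi 0 * phi PI) 0.
  by apply/RleP; rewrite RmultE R0E phi0 phiPI; lra.
have [z [_ /eqP]] := IVT_cor phi 0 PI phic (Rlt_le _ _ PI_RGT_0) phi_sign.
have [k mz] := m_sel z.
by rewrite /phi mz subr_eq0 sqdist_loop_pt (negbTE (sqdist_loop2_neq2 _ _)).
Qed.

Theorem theorem1 (n d k : nat) (hn : (2 <= n)%N) (hd : (2 <= d)%N) (hk : (0 < k)%N)
  (X : 'rV[R]_k -> Prop) (g : Snd n d -> 'rV[R]_k)
  (h : 'rV[R]_k -> 'M[R]_(n, d))
  (gX : forall V, X (g V))
  (gcont : chamfer_continuous g)
  (hg : forall (V : Snd n d) (v : 'I_n -> 'rV[R]_d),
          [fset v i | i in 'I_n] = val V ->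
          exists s : 'S_n, h (g V) = \matrix_(i < n, j < d) v (s i) 0 j) :
  ~ continuous_on X h.
Proof.
case: n hn g h gX gcont hg => [|[|n]] // _ g h gX gcont hg.
case: d hd g h gX gcont hg => [|[|d]] // _ g h gX gcont hg hc.
pose L := loop_set n.+2 d.
have Mc := continuity_comp_entry gX gcont hc (loop_set_chamfer_continuous n.+2 d).
have [s hs] := hg (L 0) (fun i => loop_pt d 0 i) erefl.
pose r := (s^-1)%g ord0.
have row_sel t : exists k, row r (h (g (L t))) = loop_pt d t k.
  have [s' hs'] := hg (L t) (fun i => loop_pt d t i) erefl.
  by exists (s' r); apply/rowP => j; rewrite hs' !mxE.
apply: (no_continuous_loop_selection (m := fun t => row r (h (g (L t))))) row_sel.
- move=> j; apply: (@continuity_eq (fun t => h (g (L t)) r j)) => [t|]; first by rewrite mxE.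
  exact: Mc.
- by apply/rowP => j; rewrite hs !mxE permKV.
- by apply/rowP => j; rewrite /L loop_set_PI hs !mxE permKV /loop_pt loop2_PI.
Qed.
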